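(* Let $T$ be an LMSR tree with liquidity parameter $b>0$, let $\alpha\in\Omega$, and let $I=[\alpha,1)$. Consider the following procedure (Algorithm 1). Initialize $z\gets\mathit{root}$, $P\gets 1$, $\mathit{price}\gets 0$. While $\alpha_z\neq\alpha$ and $z$ is not a leaf: set $P\gets P\,e^{s_z/b}$; if $\alpha<\alpha_{\mathrm{right}(z)}$ then set $\mathit{price}\gets\mathit{price}+P\,S_{\mathrm{right}(z)}/S_{\mathit{root}}$ and $z\gets\mathrm{left}(z)$, otherwise set $z\gets\mathrm{right}(z)$. After the loop, return $$\mathit{price}+\frac{\beta_z-\alpha}{\beta_z-\alpha_z}\cdot \frac{P\,S_z}{S_{\mathit{root}}}.$$ Then the procedure returns exactly the LMSR price $p_{I\cap\Omega}(\boldsymbol\theta(T))$ of the bundle security for $I$ in the market state $\boldsymbol\theta(T)$ represented by $T$, and it runs in time $\mathcal O(\log n_{\mathit{vals}})$ (counting arithmetic operations, including exponentials, as unit cost), where $n_{\mathit{vals}}=|\{\alpha_z: z\in T\}|$ is the number of distinct left endpoints of node intervals of $T$.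
   Context: Fix an integer $K\ge 1$, $N=2^K$, and the outcome set $\Omega=\{j/N: j=0,1,\dots,N-1\}$. Fix a liquidity parameter $b>0$. For a state $\boldsymbol\theta\in\mathbb R^{\Omega}$ and an event $E\subseteq\Omega$, the LMSR price of the bundle security for $E$ is $p_E(\boldsymbol\theta)=\sum_{\omega\in E}e^{\theta_\omega/b}\big/\sum_{\nu\in\Omega}e^{\theta_\nu/b}$. An interval $[\alpha,\beta)$ is identified with the event $[\alpha,\beta)\cap\Omega$. An LMSR tree is a full binary tree (every node $z$ is either a leaf or has exactly two children $\mathrm{left}(z)$, $\mathrm{right}(z)$) in which each node $z$ carries an interval $I_z=[\alpha_z,\beta_z)$ with $\alpha_z,\beta_z\in\Omega\cup\{1\}$, a height $h_z\ge 0$, a real number $s_z$ (shares held at $z$), and a number $S_z\ge 0$ (partial normalization constant), such that: (i) binary-search property: $I_{\mathit{root}}=[0,1)$ and for every inner node $z$, $\alpha_z=\alpha_{\mathrm{left}(z)}<\beta_{\mathrm{left}(z)}=\alpha_{\mathrm{right}(z)}<\beta_{\mathrm{right}(z)}=\beta_z$; (ii) height balance: $h_z=0$ for leaves and, for inner $z$, $h_z=1+\max\{h_{\mathrm{left}(z)},h_{\mathrm{right}(z)}\}$ and $|h_{\mathrm{left}(z)}-h_{\mathrm{right}(z)}|\le 1$; (iii) partial-normalization correctness: $S_z=e^{s_z/b}(\beta_z-\alpha_z)$ for leaves and $S_z=e^{s_z/b}(S_{\mathrm{left}(z)}+S_{\mathrm{right}(z)})$ for inner nodes. The market state represented by $T$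 is $\boldsymbol\theta(T)\in\mathbb R^\Omega$ with $\theta_\omega(T)=\sum_{z\in T:\ \omega\in I_z}s_z$. *)

From Stdlib Require Import Reals Lra Lia Arith List.
Open Scope R_scope.

(* Interval endpoints are represented by natural numbers j <= N, standing for
   the real number j/N in Omega ∪ {1}.  Outcome omega = j/N for j < N. *)

(* A node: left endpoint index, right endpoint index, height h_z, shares s_z,
   partial normalization constant S_z (and children for inner nodes). *)
Inductive ltree : Type :=
| LLeaf : nat -> nat -> nat -> R -> R -> ltree
| LNode : nat -> nat -> nat -> R -> R -> ltree -> ltree -> ltree.

Definition alpha_ (z : ltree) : nat :=
  match z with LLeaf a _ _ _ _ | LNode a _ _ _ _ _ _ => a end.
Definition beta_ (z : ltree) : nat :=
  match z with LLeaf _ c _ _ _ | LNode _ c _ _ _ _ _ => c end.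
Definition height_ (z : ltree) : nat :=
  match z with LLeaf _ _ h _ _ | LNode _ _ h _ _ _ _ => h end.
Definition shares_ (z : ltree) : R :=
  match z with LLeaf _ _ _ s _ | LNode _ _ _ s _ _ _ => s end.
Definition snorm_ (z : ltree) : R :=
  match z with LLeaf _ _ _ _ Sz | LNode _ _ _ _ Sz _ _ => Sz end.

Definition pt (N j : nat) : R := INR j / INR N.

Fixpoint wf_node (N : nat) (b : R) (z : ltree) : Prop :=
  match z with
  | LLeaf a c h s Sz =>
      (a <= N)%nat /\ (c <= N)%nat /\ h = 0%nat /\
      Sz = exp (s / b) * (pt N c - pt N a)
  | LNode a c h s Sz l r =>
      (a <= N)%nat /\ (c <= N)%nat /\
      a = alpha_ l /\ (alpha_ l < beta_ l)%nat /\ beta_ l = alpha_ r /\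
      (alpha_ r < beta_ r)%nat /\ beta_ r = c /\
      h = S (Nat.max (height_ l) (height_ r)) /\
      (height_ l <= height_ r + 1)%nat /\ (height_ r <= height_ l + 1)%nat /\
      Sz = exp (s / b) * (snorm_ l + snorm_ r) /\
      wf_node N b l /\ wf_node N b r
  end.

Definition is_lmsr_tree (K : nat) (b : R) (T : ltree) : Prop :=
  alpha_ T = 0%nat /\ beta_ T = (2 ^ K)%nat /\ wf_node (2 ^ K) b T.

Fixpoint theta (T : ltree) (j : nat) : R :=
  match T with
  | LLeaf a c _ s _ =>
      if (Nat.leb a j && Nat.ltb j c)%bool then s else 0
  | LNode a c _ s _ l r =>
      (if (Nat.leb a j && Nat.ltb j c)%bool then s else 0) + theta l j + theta r j
  end.

Definition sumR (n : nat) (f : nat -> R) : R :=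
  fold_right Rplus 0 (map f (seq 0 n)).

(* LMSR price of the bundle for the event E ⊆ Omega (E given as a predicate
   on indices j < N), in state th *)
Definition lmsr_price (N : nat) (b : R) (th : nat -> R) (E : nat -> bool) : R :=
  sumR N (fun j => if E j then exp (th j / b) else 0) /
  sumR N (fun j => exp (th j / b)).

Definition ray_event (a : nat) : nat -> bool := fun j => Nat.leb a j.

(* Algorithm 1.  Returns (result, number of loop iterations + 1); the cost
   counts each loop iteration (a constant number of arithmetic operations,
   including one exponential) and the final step as one unit each. *)
Fixpoint algo1_loop (N : nat) (b : R) (a : nat) (Sroot : R)
    (z : ltree) (P price : R) : R * nat :=
  let final := (price + ((pt N (beta_ z) - pt N a) / (pt N (beta_ z) - pt N (alpha_ z)))
                        * (P * snorm_ z / Sroot), 1%nat) in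
  if Nat.eqb (alpha_ z) a then final else
  match z with
  | LLeaf _ _ _ _ _ => final
  | LNode _ _ _ s _ l r =>
      let P' := P * exp (s / b) in
      if Nat.ltb a (alpha_ r) then
        let res := algo1_loop N b a Sroot l P' (price + P' * snorm_ r / Sroot) in
        (fst res, S (snd res))
      else
        let res := algo1_loop N b a Sroot r P' price in
        (fst res, S (snd res))
  end.

Definition algo1 (K : nat) (b : R) (T : ltree) (a : nat) : R * nat :=
  algo1_loop (2 ^ K) b a (snorm_ T) T 1 0.

Fixpoint nodes (T : ltree) : list ltree :=
  match T with
  | LLeaf _ _ _ _ _ => T :: nil
  | LNode _ _ _ _ _ l r => T :: nodes l ++ nodes r
  end.

Definition n_vals (T : ltree) : nat :=
  length (nodup Nat.eq_dec (map alpha_ (nodes T))).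

From Stdlib Require Import Reals Lra Lia Arith List.
Open Scope R_scope.

(* For a subtree z and an index u, let [mass b z u] be the sum of the weights
   exp(theta_z(j)/b) over the outcomes j of I_z with j >= u, where theta_z only
   counts the shares stored in z's own subtree.  Three facts drive the proof:
   - the partial normalization S_z times N is the full mass of z (outcomes are
     spaced 1/N apart, whereas S_z measures interval lengths);
   - at an inner node the mass splits as e^{s_z/b} times the masses of the
     children, restricted to the part of I_z above u;
   - on a leaf the mass is linear in u, which justifies the final interpolation.
   Together they give the loop invariant
     result = price + P * mass z a / (N * S_root)   (a = index of alpha),
   which at the root is exactly the LMSR price.  For the cost, each iteration
   descends one level, so the loop runs at most height+1 times; height balance
   forces at least 2^(h/2) leaves, whose left endpoints are distinct, so the
   height is at most 2 log2(n_vals) + 1. *)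

Definition sumRange (f : nat -> R) (m n : nat) : R :=
  fold_right Rplus 0 (map f (seq m n)).

Lemma fold_right_Rplus_init (l : list R) (x : R) :
  fold_right Rplus x l = fold_right Rplus 0 l + x.
Proof. induction l as [|y l IH]; simpl; [lra | rewrite IH; lra]. Qed.

Lemma sumRange_split f m n1 n2 :
  sumRange f m (n1 + n2) = sumRange f m n1 + sumRange f (m + n1) n2.
Proof.
  unfold sumRange. rewrite seq_app, map_app, fold_right_app, fold_right_Rplus_init.
  reflexivity.
Qed.

Lemma sumRange_ext f g m n :
  (forall j, (m <= j < m + n)%nat -> f j = g j) -> sumRange f m n = sumRange g m n.
Proof.
  revert m; induction n as [|n IH]; intros m H; unfold sumRange in *; simpl; [reflexivity|].
  rewrite (H m) by lia. f_equal. apply IH. intros; apply H; lia.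
Qed.

Lemma sumRange_scale c f m n :
  sumRange (fun j => c * f j) m n = c * sumRange f m n.
Proof.
  revert m; induction n as [|n IH]; intros m; unfold sumRange in *; simpl; [ring|].
  rewrite IH. ring.
Qed.

Lemma sumRange_const c m n : sumRange (fun _ => c) m n = INR n * c.
Proof.
  revert m; induction n as [|n IH]; intros m; unfold sumRange in *; simpl; [ring|].
  rewrite IH. destruct n; simpl; ring.
Qed.

Lemma sumRange_pos f m n : (forall j, 0 < f j) -> (0 < n)%nat -> 0 < sumRange f m n.
Proof.
  intros Hf. revert m; induction n as [|n IH]; intros m Hn; [lia|].
  unfold sumRange in *; simpl. specialize (Hf m).
  destruct n as [|n]; simpl; [lra|]. specialize (IH (S m) ltac:(lia)). simpl in IH. lra.
Qed.

Ltac unpack_wf H :=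
  simpl in H;
  destruct H as (Ha & Hc & Hal & Hlb & Hbr & Hrb & Hrc & Hh & Hhl & Hhr & HSz & Hwl & Hwr).

Lemma indicator_in a c j (s : R) :
  (a <= j < c)%nat -> (if (Nat.leb a j && Nat.ltb j c)%bool then s else 0) = s.
Proof. intros H. rewrite (proj2 (Nat.leb_le a j)), (proj2 (Nat.ltb_lt j c)) by lia. reflexivity. Qed.

Lemma theta_outside N b z j :
  wf_node N b z -> (j < alpha_ z \/ beta_ z <= j)%nat -> theta z j = 0.
Proof.
  induction z as [a c h s Sz | a c h s Sz l IHl r IHr]; intros Hw Hj; simpl.
  - destruct (Nat.leb a j) eqn:E1; destruct (Nat.ltb j c) eqn:E2; simpl; try reflexivity.
    apply Nat.leb_le in E1; apply Nat.ltb_lt in E2; simpl in Hj; lia.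
  - unpack_wf Hw. simpl in Hj. rewrite IHl, IHr by (auto; lia).
    destruct (Nat.leb a j) eqn:E1; destruct (Nat.ltb j c) eqn:E2; simpl; try ring.
    apply Nat.leb_le in E1; apply Nat.ltb_lt in E2; lia.
Qed.

Definition mass (b : R) (z : ltree) (u : nat) : R :=
  sumRange (fun j => exp (theta z j / b)) u (beta_ z - u).

Lemma weight_in_child N b a c h s Sz l r (child other : ltree) j :
  wf_node N b other -> (j < alpha_ other \/ beta_ other <= j)%nat ->
  theta (LNode a c h s Sz l r) j = s + theta child j + theta other j ->
  exp (theta (LNode a c h s Sz l r) j / b) = exp (s / b) * exp (theta child j / b).
Proof.
  intros Hwo Hout ->. rewrite (theta_outside N b other j) by auto.
  rewrite Rplus_0_r, Rdiv_plus_distr, exp_plus. reflexivity.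
Qed.

Lemma mass_node_left N b a c h s Sz l r u :
  wf_node N b (LNode a c h s Sz l r) -> (a <= u <= beta_ l)%nat ->
  mass b (LNode a c h s Sz l r) u = exp (s / b) * (mass b l u + mass b r (alpha_ r)).
Proof.
  intros Hw Hu. unpack_wf Hw. unfold mass. simpl beta_.
  replace (c - u)%nat with ((beta_ l - u) + (beta_ r - alpha_ r))%nat by lia.
  rewrite sumRange_split. replace (u + (beta_ l - u))%nat with (alpha_ r) by lia.
  rewrite Rmult_plus_distr_l, <- !sumRange_scale.
  f_equal; apply sumRange_ext; intros j Hj.
  - apply (weight_in_child N b a c h s Sz l r l r); auto; try lia.
    simpl. rewrite indicator_in by lia. reflexivity.
  - apply (weight_in_child N b a c h s Sz l r r l); auto; try lia.
    simpl. rewrite indicator_in by lia. ring.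
Qed.

Lemma mass_node_right N b a c h s Sz l r u :
  wf_node N b (LNode a c h s Sz l r) -> (alpha_ r <= u <= c)%nat ->
  mass b (LNode a c h s Sz l r) u = exp (s / b) * mass b r u.
Proof.
  intros Hw Hu. unpack_wf Hw. unfold mass. simpl beta_. rewrite Hrc.
  rewrite <- sumRange_scale. apply sumRange_ext; intros j Hj.
  apply (weight_in_child N b a c h s Sz l r r l); auto; try lia.
  simpl. rewrite indicator_in by lia. ring.
Qed.

(* On a leaf all outcomes carry the same weight, so the mass is linear in u. *)
Lemma mass_leaf b a c h s Sz u :
  (u <= c)%nat -> (a <= u)%nat ->
  mass b (LLeaf a c h s Sz) u = INR (c - u) * exp (s / b).
Proof.
  intros Huc Hau. unfold mass. simpl beta_. rewrite <- (sumRange_const _ u).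
  apply sumRange_ext. intros j Hj. simpl. rewrite indicator_in by lia. reflexivity.
Qed.

Lemma snorm_mass N b z :
  (0 < N)%nat -> wf_node N b z -> (alpha_ z < beta_ z)%nat ->
  snorm_ z * INR N = mass b z (alpha_ z).
Proof.
  intros HN. assert (HN' : INR N <> 0) by (apply not_0_INR; lia).
  induction z as [a c h s Sz | a c h s Sz l IHl r IHr]; intros Hw Hab; simpl in Hab.
  - simpl in Hw. destruct Hw as (Ha & Hc & Hh & HSz).
    simpl. rewrite mass_leaf, HSz by lia. unfold pt.
    rewrite minus_INR by lia. field. exact HN'.
  - pose proof Hw as Hw'. unpack_wf Hw.
    simpl alpha_. rewrite (mass_node_left N) by (auto; lia). simpl snorm_.
    rewrite HSz, Rmult_assoc, Rmult_plus_distr_r, IHl, IHr by auto.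
    subst a. reflexivity.
Qed.

Lemma final_step N b a Sroot z P price :
  (0 < N)%nat -> Sroot <> 0 -> wf_node N b z -> (alpha_ z <= a < beta_ z)%nat ->
  mass b z a * INR (beta_ z - alpha_ z) = INR (beta_ z - a) * mass b z (alpha_ z) ->
  price + (pt N (beta_ z) - pt N a) / (pt N (beta_ z) - pt N (alpha_ z))
          * (P * snorm_ z / Sroot)
  = price + P * mass b z a / (INR N * Sroot).
Proof.
  intros HN HSroot Hw Ha Hlin.
  assert (HN' : INR N <> 0) by (apply not_0_INR; lia).
  assert (Hlen : INR (beta_ z - alpha_ z) <> 0) by (apply not_0_INR; lia).
  assert (Hpt : forall u, (u <= beta_ z)%nat -> pt N (beta_ z) - pt N u = INR (beta_ z - u) / INR N).
  { intros u Hu. unfold pt. rewrite minus_INR by exact Hu. field. exact HN'. }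
  rewrite !Hpt by lia.
  replace (mass b z a) with (INR (beta_ z - a) * mass b z (alpha_ z) / INR (beta_ z - alpha_ z))
    by (field_simplify_eq; [lra | exact Hlen]).
  rewrite <- (snorm_mass N b z) by (auto; lia).
  field. repeat split; auto.
Qed.

Lemma loop_stops_at_alpha N b a Sroot z P price :
  alpha_ z = a ->
  algo1_loop N b a Sroot z P price =
  (price + ((pt N (beta_ z) - pt N a) / (pt N (beta_ z) - pt N (alpha_ z)))
           * (P * snorm_ z / Sroot), 1%nat).
Proof. intros <-; destruct z; simpl; rewrite Nat.eqb_refl; reflexivity. Qed.

Lemma loop_value N b a Sroot z :
  (0 < N)%nat -> Sroot <> 0 -> wf_node N b z -> (alpha_ z <= a < beta_ z)%nat ->
  forall P price,
  fst (algo1_loop N b a Sroot z P price) = price + P * mass b z a / (INR N * Sroot).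
Proof.
  intros HN HSroot. assert (HN' : INR N <> 0) by (apply not_0_INR; lia).
  induction z as [a' c h s Sz | a' c h s Sz l IHl r IHr]; intros Hw Hz P price.
  - assert (Hlin : mass b (LLeaf a' c h s Sz) a * INR (c - a')
                   = INR (c - a) * mass b (LLeaf a' c h s Sz) a').
    { simpl in Hz. rewrite !mass_leaf by lia. ring. }
    (* a leaf ends the loop whether or not its left endpoint is alpha *)
    simpl algo1_loop. destruct (a' =? a)%nat;
      exact (final_step N b a Sroot (LLeaf a' c h s Sz) P price HN HSroot Hw Hz Hlin).
  - destruct (Nat.eq_dec a' a) as [E | E].
    { rewrite loop_stops_at_alpha by exact E. cbn [fst]. apply final_step; auto.
      simpl in E |- *. subst. ring. }
    pose proof Hw as Hw'. simpl algo1_loop. rewrite (proj2 (Nat.eqb_neq _ _) E).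
    unpack_wf Hw. simpl in Hz.
    destruct (Nat.ltb a (alpha_ r)) eqn:Hside; simpl fst.
    + apply Nat.ltb_lt in Hside. rewrite IHl by (auto; lia).
      rewrite (mass_node_left N), <- (snorm_mass N b r) by (auto; lia).
      field. auto.
    + apply Nat.ltb_ge in Hside. rewrite IHr by (auto; lia).
      rewrite (mass_node_right N) by (auto; lia). field. auto.
Qed.

(* Each iteration descends one level, so the loop performs at most h_z + 1 steps. *)
Lemma loop_cost N b a Sroot z P price :
  wf_node N b z -> (snd (algo1_loop N b a Sroot z P price) <= height_ z + 1)%nat.
Proof.
  revert P price.
  induction z as [a' c h s Sz | a' c h s Sz l IHl r IHr]; intros P price Hw; simpl.
  - destruct (a' =? a)%nat; simpl; lia.
  - unpack_wf Hw. destruct (a' =? a)%nat; [simpl; lia|].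
    set (P' := P * exp (s / b)).
    destruct (a <? alpha_ r)%nat; simpl.
    + specialize (IHl P' (price + P' * snorm_ r / Sroot) Hwl). lia.
    + specialize (IHr P' price Hwr). lia.
Qed.

Fixpoint leaf_alphas (z : ltree) : list nat :=
  match z with
  | LLeaf a _ _ _ _ => a :: nil
  | LNode _ _ _ _ _ l r => leaf_alphas l ++ leaf_alphas r
  end.

Lemma leaf_alphas_node_alphas z x : In x (leaf_alphas z) -> In x (map alpha_ (nodes z)).
Proof.
  induction z as [| a c h s Sz l IHl r IHr]; simpl; intros H; [exact H|].
  right. rewrite map_app. apply in_or_app. apply in_app_or in H. tauto.
Qed.

Lemma leaf_alphas_range N b z x :
  wf_node N b z -> (alpha_ z < beta_ z)%nat -> In x (leaf_alphas z) ->
  (alpha_ z <= x < beta_ z)%nat.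
Proof.
  induction z as [| a c h s Sz l IHl r IHr]; simpl; intros Hw Hab H.
  - destruct H as [H | []]. lia.
  - unpack_wf Hw.
    apply in_app_or in H. destruct H as [H | H].
    + specialize (IHl Hwl Hlb H). lia.
    + specialize (IHr Hwr Hrb H). lia.
Qed.

(* Leaves have disjoint nonempty intervals, hence distinct left endpoints. *)
Lemma leaf_alphas_NoDup N b z :
  wf_node N b z -> (alpha_ z < beta_ z)%nat -> NoDup (leaf_alphas z).
Proof.
  induction z as [| a c h s Sz l IHl r IHr]; simpl; intros Hw Hab.
  - constructor; [simpl; tauto | constructor].
  - unpack_wf Hw.
    apply NoDup_app; auto. intros x H1 H2.
    pose proof (leaf_alphas_range N b l x Hwl Hlb H1).
    pose proof (leaf_alphas_range N b r x Hwr Hrb H2). lia.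
Qed.

Lemma leaf_count_balanced N b z k :
  wf_node N b z -> (2 * k <= height_ z)%nat -> (2 ^ k <= length (leaf_alphas z))%nat.
Proof.
  revert k.
  induction z as [| a c h s Sz l IHl r IHr]; simpl; intros k Hw Hk.
  - destruct Hw as (Ha & Hc & Hh & HS). subst. replace k with 0%nat by lia. simpl. lia.
  - unpack_wf Hw.
    rewrite length_app. destruct k as [|k].
    + specialize (IHl 0%nat Hwl ltac:(lia)). simpl in *. lia.
    + specialize (IHl k Hwl ltac:(lia)). specialize (IHr k Hwr ltac:(lia)).
      rewrite Nat.pow_succ_r'. lia.
Qed.

Lemma height_log_bound N b z :
  wf_node N b z -> (alpha_ z < beta_ z)%nat ->
  (height_ z <= 2 * Nat.log2 (n_vals z) + 1)%nat.
Proof.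
  intros Hw Hab.
  assert (Hlen : (length (leaf_alphas z) <= n_vals z)%nat).
  { unfold n_vals. apply NoDup_incl_length.
    - exact (leaf_alphas_NoDup N b z Hw Hab).
    - intros x Hx. apply nodup_In, leaf_alphas_node_alphas, Hx. }
  pose proof (leaf_count_balanced N b z 0 Hw ltac:(lia)) as Hone. simpl in Hone.
  pose proof (Nat.log2_spec (n_vals z) ltac:(lia)) as [_ Hlog].
  destruct (Nat.le_gt_cases (2 * S (Nat.log2 (n_vals z))) (height_ z)) as [Hg | Hg].
  - pose proof (leaf_count_balanced N b z _ Hw Hg). lia.
  - lia.
Qed.

Lemma price_as_mass N b T a :
  alpha_ T = 0%nat -> beta_ T = N -> (a <= N)%nat ->
  lmsr_price N b (theta T) (ray_event a) = mass b T a / mass b T 0.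
Proof.
  intros H0 HN Ha. unfold lmsr_price, mass, sumR. rewrite HN, Nat.sub_0_r.
  fold (sumRange (fun j => if ray_event a j then exp (theta T j / b) else 0) 0 N).
  fold (sumRange (fun j => exp (theta T j / b)) 0 N). f_equal.
  replace N with (a + (N - a))%nat at 1 by lia. rewrite sumRange_split.
  rewrite (sumRange_ext _ (fun _ => 0)), sumRange_const, Rmult_0_r, Rplus_0_l.
  - apply sumRange_ext. intros j Hj. unfold ray_event.
    rewrite (proj2 (Nat.leb_le a j)) by lia. reflexivity.
  - intros j Hj. unfold ray_event. rewrite (proj2 (Nat.leb_gt a j)) by lia. reflexivity.
Qed.

Theorem theorem1 :
  exists c : nat,
    forall (K : nat) (b : R) (T : ltree) (a : nat),
      (1 <= K)%nat -> 0 < b -> is_lmsr_tree K b T -> (a < 2 ^ K)%nat ->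
      fst (algo1 K b T a) = lmsr_price (2 ^ K) b (theta T) (ray_event a) /\
      (snd (algo1 K b T a) <= c * (Nat.log2 (n_vals T) + 1))%nat.
Proof.
  exists 2%nat. intros K b T a _ _ (H0 & HN & Hw) Ha.
  set (N := (2 ^ K)%nat) in *.
  assert (HNpos : (0 < N)%nat) by (unfold N; apply Nat.neq_0_lt_0, Nat.pow_nonzero; lia).
  assert (Hfull : snorm_ T * INR N = mass b T 0).
  { rewrite <- H0. apply snorm_mass; auto. lia. }
  assert (Hmass_pos : 0 < mass b T 0).
  { apply sumRange_pos; [intros; apply exp_pos | lia]. }
  assert (HN' : INR N <> 0) by (apply not_0_INR; lia).
  assert (HSroot : snorm_ T <> 0) by (intro E; rewrite E in Hfull; lra).
  unfold algo1. fold N. split.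
  - rewrite (loop_value N b a (snorm_ T) T) by (auto; lia).
    rewrite price_as_mass, <- Hfull by (auto; lia). field. auto.
  - pose proof (loop_cost N b a (snorm_ T) T 1 0 Hw).
    pose proof (height_log_bound N b T Hw ltac:(lia)). lia.
Qed.
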